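(* Let $k\ge1$ and $\ell\ge1$. The set $\{n\in A_{2k}:\max\mathcal{CG}(n)=F_{2k+2\ell}\}$ is exactly $\{q(j):F_{2\ell+1}+1\le j\le F_{2\ell+3}\}$; i.e. its elements occupy precisely positions $F_{2\ell+1}+1$ through $F_{2\ell+3}$ (inclusive) in the increasing enumeration of $A_{2k}$.
   Context: Fibonacci numbers: $F_1=F_2=1$, $F_{n+1}=F_n+F_{n-1}$ for $n\ge2$. Chung–Graham decomposition: every positive integer $n$ has a unique representation $n=\sum_{i\ge1}c_iF_{2i}$ with $c_i\in\{0,1,2\}$, only finitely many nonzero, such that whenever $c_i=c_j=2$ with $i<j$ there is $k$ with $i<k<j$ and $c_k=0$. Let $\mathcal{CG}(n)$ be the set of $F_{2i}$ with $c_i\neq0$. For $k\ge1$, $A_{2k}=\{n\ge1:\min\mathcal{CG}(n)=F_{2k}\}$, and $q(1)<q(2)<q(3)<\cdots$ denote the elements of $A_{2k}$ listed in increasing order. *)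

From mathcomp Require Import all_boot.
Set Implicit Arguments. Unset Strict Implicit. Unset Printing Implicit Defensive.

Fixpoint fib (n : nat) : nat :=
  match n with
  | 0 => 0
  | 1 => 1
  | (m.+1 as p).+1 => fib p + fib m
  end.

(* A candidate Chung–Graham representation of n: c_(i+1) := c i for i < n
   (coefficient of F_{2(i+1)}), digits in {0,1,2}.  Coefficients c_i with i > n
   are necessarily 0 since F_{2i} >= i > n, so length n suffices. *)
Definition CGrep (n : nat) (c : {ffun 'I_n -> 'I_3}) : bool :=
  (\sum_(i < n) (c i : nat) * fib (2 * i.+1) == n) &&
  [forall i : 'I_n, forall j : 'I_n,
     [&& i < j, (c i : nat) == 2 & (c j : nat) == 2] ==>
     [exists m : 'I_n, [&& i < m, m < j & (c m : nat) == 0]]].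

Definition CG (n : nat) : seq nat :=
  if [pick c : {ffun 'I_n -> 'I_3} | CGrep c] is Some c then
    [seq fib (2 * (val i).+1) | i <- enum 'I_n & (c i : nat) != 0]
  else [::].

Definition inA (k n : nat) : bool :=
  [&& 0 < n, fib (2 * k) \in CG n & all (fun x => fib (2 * k) <= x) (CG n)].

Definition maxCG_is (n v : nat) : bool :=
  (v \in CG n) && all (fun x => x <= v) (CG n).

(* 1-based position of n in the increasing enumeration q(1) < q(2) < ... of A_{2k}
   (meaningful when inA k n): the number of elements of A_{2k} that are <= n. *)
Definition posA (k n : nat) : nat := \sum_(1 <= m < n.+1) inA k m.

From mathcomp Require Import all_boot zify.
Set Implicit Arguments. Unset Strict Implicit. Unset Printing Implicit Defensive.

(* Encode a Chung-Graham representation by its digit sequence d, digit i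
   carrying weight F_{2i+2}.  A valid digit sequence supported below N has
   value < F_{2N+2}, and < F_{2N+1} exactly when every 2 is followed by a 0
   below N; this gives existence and uniqueness of representations.  Every
   m in [F_{2M}, F_{2M+2}) is c F_{2M} + i with c = 1, i < F_{2M} or c = 2,
   i < F_{2M-1}, and its digits are those of i with digit c added on top.
   For M > k this does not change the lowest nonzero digit, so the numbers
   a_M, b_M of elements of A_{2k} below F_{2M}, F_{2M-1} satisfy
   a_{M+1} = 2 a_M + b_M, b_{M+1} = a_M + b_M, with a_{k+1} = 2, b_{k+1} = 1;
   hence a_{k+l} = F_{2l+1}.  The elements of A_{2k} with largest part
   F_{2k+2l} are those in [F_{2k+2l}, F_{2k+2l+2}), which occupy positions
   a_{k+l} + 1 to a_{k+l+1}. *)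

Lemma fibSS n : fib n.+2 = fib n.+1 + fib n. Proof. by []. Qed.

Lemma fib_gt0 n : 0 < fib n.+1.
Proof. by elim: n => // -[|n] IH //; rewrite fibSS ltn_addr. Qed.

Lemma fib_leSn n : fib n <= fib n.+1.
Proof. by case: n => // n; rewrite fibSS leq_addr. Qed.

Definition evenfib i := fib (2 * i.+1).
Definition oddfib i := fib (2 * i).+1.

Lemma evenfibS n : evenfib n.+1 = evenfib n + evenfib n + oddfib n.
Proof. by rewrite /evenfib /oddfib !mulnS !add2n !fibSS; lia. Qed.

Lemma oddfibS n : oddfib n.+1 = evenfib n + oddfib n.
Proof. by rewrite /evenfib /oddfib !mulnS !add2n. Qed.

Lemma oddfib_gt0 n : 0 < oddfib n. Proof. exact: fib_gt0. Qed.

Lemma evenfib_gt0 n : 0 < evenfib n.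
Proof. by rewrite /evenfib mulnS add2n fib_gt0. Qed.

Lemma oddfib_le_evenfib n : oddfib n <= evenfib n.
Proof. by rewrite /evenfib mulnS add2n fib_leSn. Qed.

Lemma leq_evenfib : {mono evenfib : m n / m <= n}.
Proof.
apply: leq_mono; apply: homo_ltn ltn_trans _ => n.
by rewrite evenfibS -addnA -[X in X < _]addn0 ltn_add2l addn_gt0 evenfib_gt0.
Qed.

Lemma evenfib_inj : injective evenfib.
Proof. exact: incn_inj leq_evenfib. Qed.

Lemma ltn_evenfib : {mono evenfib : m n / m < n}.
Proof. by move=> m n; rewrite !ltnNge leq_evenfib. Qed.

Lemma ltn_id_evenfib n : n < evenfib n.
Proof.
elim: n => [|n IH]; first exact: evenfib_gt0.
by rewrite evenfibS; have := evenfib_gt0 n; have := oddfib_gt0 n; lia.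
Qed.

Definition digval N (d : nat -> nat) := \sum_(i < N) d i * evenfib i.

Lemma digvalS N d : digval N.+1 d = digval N d + d N * evenfib N.
Proof. by rewrite /digval big_ord_recr. Qed.

Lemma digval_widen N M d :
  (forall j, N <= j -> d j = 0) -> N <= M -> digval M d = digval N d.
Proof.
move=> dz /subnKC <-; elim: (M - N) => [|k IH]; first by rewrite addn0.
by rewrite addnS digvalS IH dz ?leq_addr // addn0.
Qed.

Lemma digval_ge N d j : j < N -> d j * evenfib j <= digval N d.
Proof. by move=> jN; rewrite /digval (bigD1 (Ordinal jN)) //= leq_addr. Qed.

Definition cg_digits (d : nat -> nat) : Prop :=
  (forall i, d i <= 2) /\
  (forall i j, i < j -> d i = 2 -> d j = 2 -> exists2 m, i < m < j & d m = 0).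

Definition zero_after_twos N (d : nat -> nat) : Prop :=
  forall j, j < N -> d j = 2 -> exists2 m, j < m < N & d m = 0.

Lemma zero_after_twosS N d :
  zero_after_twos N.+1 d <-> d N = 0 \/ d N <> 2 /\ zero_after_twos N d.
Proof.
split=> [z|[dN0 | [dN2 z]] j].
- case: (d N =P 0) => [|dN0]; [by left | right; split].
    by move=> dN2; have [m] := z N (ltnSn N) dN2; lia.
  move=> j jN dj; have [m /andP[jm mN] dm] := z j (ltnW jN) dj.
  exists m => //; rewrite jm ltn_neqAle -ltnS mN andbT; apply/eqP => mN'.
  by apply: dN0; rewrite -mN'.
- rewrite ltnS leq_eqVlt => /predU1P[->|jN]; first by rewrite dN0.
  by exists N => //; rewrite jN /=.
- rewrite ltnS leq_eqVlt => /predU1P[->//|jN] dj.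
  have [m /andP[jm mN] dm] := z j jN dj.
  by exists m; rewrite // jm ltnW.
Qed.

Lemma digval_bounds d N : cg_digits d ->
  digval N d < evenfib N /\ (zero_after_twos N d <-> digval N d < oddfib N).
Proof.
move=> [d_le2 d_sep]; elim: N => [|N [IHe IHo]].
  by rewrite /digval big_ord0; split=> //; split=> // _ j.
rewrite zero_after_twosS digvalS evenfibS oddfibS.
have := oddfib_le_evenfib N.
case dN: (d N) (d_le2 N) => [|[|[|//]]] _ oe; rewrite ?mul0n ?mul1n.
- by split; [lia | split=> _; [lia | left]].
- split; first lia.
  by split=> [[//|[_ /IHo]]|?]; [lia | right; split=> //; apply/IHo; lia].
- have zN : zero_after_twos N d by move=> j jN dj; apply: d_sep.
  have := IHo.1 zN; split; first lia.
  by split=> [[//|[//]]|]; lia.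
Qed.

Lemma digval_lt_evenfib d N : cg_digits d -> digval N d < evenfib N.
Proof. by move=> /(digval_bounds N) []. Qed.

Lemma cg_digits_digval_inj N d e : cg_digits d -> cg_digits e ->
  digval N d = digval N e -> forall i, i < N -> d i = e i.
Proof.
move=> dd de; elim: N => [//|N IH]; rewrite !digvalS => E.
have /pair_equal_spec[dNe vNe] : (d N, digval N d) = (e N, digval N e).
  rewrite -(edivn_eq (d N) (digval_lt_evenfib N dd)).
  by rewrite -(edivn_eq (e N) (digval_lt_evenfib N de)) !(addnC (_ * _)) E.
by move=> i; rewrite ltnS leq_eqVlt => /predU1P[->//|]; apply: IH.
Qed.

Definition set_digit (d : nat -> nat) m c j := if j == m then c else d j.

Lemma cg_digits_push d N c :
  cg_digits d -> (forall j, N <= j -> d j = 0) -> c <= 2 ->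
  (c = 2 -> digval N d < oddfib N) ->
  [/\ cg_digits (set_digit d N c), forall j, N < j -> set_digit d N c j = 0
    & digval N.+1 (set_digit d N c) = digval N d + c * evenfib N].
Proof.
move=> dd dz c_le2 c2; have [d_le2 d_sep] := dd; rewrite /set_digit; split.
- split=> [i | i j ij]; first by case: eqP.
  case: (ltngtP j N) => [jN | Nj | jN].
  + have iN := ltn_trans ij jN; rewrite !ltn_eqF // => di dj.
    have [m /andP[im mj] dm] := d_sep i j ij di dj.
    by exists m; rewrite ?im ?mj ?ltn_eqF ?(ltn_trans mj jN).
  + by move=> _; rewrite dz // ltnW.
  + move: ij; rewrite jN => iN; rewrite ltn_eqF // => di c_eq2.
    have [m /andP[im mN] dm] := (digval_bounds N dd).2.2 (c2 c_eq2) i iN di.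
    by exists m; rewrite ?im ?ltn_eqF.
- by move=> j Nj; rewrite gtn_eqF // dz // ltnW.
- rewrite digvalS eqxx; congr (_ + _); apply: eq_bigr => i _.
  by rewrite ltn_eqF.
Qed.

Lemma cg_digits_exists N n : n < evenfib N ->
  exists d, [/\ cg_digits d, forall j, N <= j -> d j = 0 & digval N d = n].
Proof.
elim: N n => [|N IH] n.
  rewrite ltnS leqn0 => /eqP->.
  by exists (fun=> 0); split=> //; rewrite /digval big1.
rewrite evenfibS => n_lt.
have [c [c_le2 cn rc_lt rc_odd]] : exists c, [/\ c <= 2, c * evenfib N <= n,
    n - c * evenfib N < evenfib N & c = 2 -> n - c * evenfib N < oddfib N].
  have := oddfib_le_evenfib N.
  case: (ltnP n (evenfib N)) => [h0|h0] oe; first by exists 0; split; lia.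
  case: (ltnP n (evenfib N + evenfib N)) => h1; first by exists 1; split; lia.
  by exists 2; split; lia.
have [d [dd dz dv]] := IH _ rc_lt; rewrite -dv in rc_odd.
have [dd' dz' dv'] := cg_digits_push dd dz c_le2 rc_odd.
by exists (set_digit d N c); split; rewrite // dv' dv subnK.
Qed.

Definition cg_rep n d := [/\ cg_digits d, forall j, n <= j -> d j = 0 & digval n d = n].

Lemma cg_rep_digits n d : cg_rep n d -> cg_digits d. Proof. by case. Qed.

Lemma cg_rep_exists n : exists d, cg_rep n d.
Proof. exact: cg_digits_exists (ltn_id_evenfib n). Qed.

Lemma cg_rep_uniq n d e : cg_rep n d -> cg_rep n e -> d =1 e.
Proof.
move=> [dd dz dv] [de ez ev] j; case: (ltnP j n) => [jn | nj]; last by rewrite dz ?ez.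
by apply: (cg_digits_digval_inj dd de) jn; rewrite dv ev.
Qed.

Lemma cg_rep_digit_le n d j : cg_rep n d -> d j <> 0 -> evenfib j <= n.
Proof.
move=> [_ dz dv] dj; case: (ltnP j n) => [jn | nj]; last by case: dj; apply: dz.
by rewrite -[X in _ <= X]dv; apply: leq_trans (digval_ge d jn); rewrite leq_pmull // lt0n; apply/eqP.
Qed.

Lemma cg_rep_zero n d M : cg_rep n d -> n < evenfib M -> forall j, M <= j -> d j = 0.
Proof.
move=> R nM j Mj; apply/eqP/negPn/negP => /eqP dj.
by have := leq_ltn_trans (cg_rep_digit_le R dj) nM; rewrite ltn_evenfib ltnNge Mj.
Qed.

Lemma cg_rep_digval n d M : cg_rep n d -> (forall j, M <= j -> d j = 0) -> digval M d = n.
Proof.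
move=> [_ dz dv] dM.
by rewrite -(digval_widen dM (leq_addr n M)) (digval_widen dz (leq_addl M n)).
Qed.

Lemma cg_rep_set i d m c : cg_rep i d -> i < evenfib m -> 0 < c <= 2 ->
  (c = 2 -> i < oddfib m) -> cg_rep (c * evenfib m + i) (set_digit d m c).
Proof.
move=> R im /andP[c_gt0 c_le2] c2.
have dz := cg_rep_zero R im; have dv := cg_rep_digval R dz.
rewrite -dv in c2; have [dd dz' dv'] := cg_digits_push (cg_rep_digits R) dz c_le2 c2.
have m_lt : m < c * evenfib m + i.
  exact: leq_trans (ltn_id_evenfib m) (leq_trans (leq_pmull _ c_gt0) (leq_addr _ _)).
split=> //.
- by move=> j /(leq_trans m_lt); apply: dz'.
- by rewrite (digval_widen dz' m_lt) dv' dv addnC.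
Qed.

Lemma cg_rep0 d : cg_rep 0 d -> forall j, d j = 0.
Proof. by case=> _ dz _ j; apply: dz. Qed.

Definition ffun_digits n (c : {ffun 'I_n -> 'I_3}) j : nat :=
  if insub j is Some i then c i else 0.

Lemma ffun_digits_ord n (c : {ffun 'I_n -> 'I_3}) (i : 'I_n) : ffun_digits c i = c i.
Proof. by rewrite /ffun_digits valK. Qed.

Lemma ffun_digits_out n (c : {ffun 'I_n -> 'I_3}) j : n <= j -> ffun_digits c j = 0.
Proof. by move=> nj; rewrite /ffun_digits insubN // -leqNgt. Qed.

Lemma CGrep_cg_rep n (c : {ffun 'I_n -> 'I_3}) : CGrep c -> cg_rep n (ffun_digits c).
Proof.
case/andP=> /eqP c_val /forallP c_sep; split.
- split=> [j | i j ij].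
    case: (ltnP j n) => [jn | nj]; last by rewrite ffun_digits_out.
    by rewrite -[j]/(val (Ordinal jn)) ffun_digits_ord -ltnS ltn_ord.
  case: (ltnP j n) => [jn | nj]; last by rewrite (ffun_digits_out c nj).
  have iN := ltn_trans ij jn.
  rewrite -[i]/(val (Ordinal iN)) -[j]/(val (Ordinal jn)) !ffun_digits_ord => ci cj.
  have /forallP/(_ (Ordinal jn)) := c_sep (Ordinal iN).
  rewrite /= ij ci cj /= => /existsP[m /and3P[im mj /eqP cm]].
  by exists m; rewrite ?im ?ffun_digits_ord.
- exact: ffun_digits_out.
- by rewrite -[RHS]c_val; apply: eq_bigr => i _; rewrite ffun_digits_ord.
Qed.

Lemma cg_rep_CGrep n d : cg_rep n d -> CGrep [ffun i : 'I_n => inord (d i) : 'I_3].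
Proof.
move=> [[d_le2 d_sep] _ dv].
have E (i : 'I_n) : ([ffun i : 'I_n => inord (d i) : 'I_3] i : nat) = d i.
  by rewrite ffunE inordK // ltnS.
apply/andP; split.
  by apply/eqP; rewrite -[RHS]dv; apply: eq_bigr => i _; rewrite E.
apply/forallP => i; apply/forallP => j; apply/implyP; rewrite !E.
case/and3P => ij /eqP di /eqP dj; have [m /andP[im mj] dm] := d_sep i j ij di dj.
by apply/existsP; exists (Ordinal (ltn_trans mj (ltn_ord j))); rewrite /= E im mj dm.
Qed.

Lemma mem_CG n d : cg_rep n d ->
  forall x, x \in CG n <-> exists2 j, d j <> 0 & x = evenfib j.
Proof.
move=> R x; rewrite /CG; case: pickP => [c cR | noR]; last first.
  by have := noR [ffun i : 'I_n => inord (d i) : 'I_3]; rewrite (cg_rep_CGrep R).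
have E := cg_rep_uniq (CGrep_cg_rep cR) R.
split.
  case/mapP => i; rewrite mem_filter => /andP[ci _] ->.
  by exists i; rewrite // -E ffun_digits_ord; apply/eqP.
case=> j dj ->; have jn : j < n.
  by case: (ltnP j n) => // nj; case: dj; rewrite -E ffun_digits_out.
apply/mapP; exists (Ordinal jn) => //; rewrite mem_filter mem_enum andbT.
by rewrite -ffun_digits_ord E; apply/eqP.
Qed.

Lemma inA_cg_rep K n d : cg_rep n d ->
  inA K.+1 n <-> [/\ 0 < n, d K <> 0 & forall j, j < K -> d j = 0].
Proof.
move=> R; rewrite /inA -/(evenfib K); have memCG := mem_CG R.
split=> [/and3P[n_gt0 /memCG[j dK /evenfib_inj jK] /allP minK] | [n_gt0 dK dz]].
  subst j; split=> // j jK; apply/eqP/negPn/negP => /eqP dj.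
  have /minK : evenfib j \in CG n by apply/memCG; exists j.
  by rewrite leq_evenfib leqNgt jK.
apply/and3P; split=> //; first by apply/memCG; exists K.
apply/allP => x /memCG[j dj ->]; rewrite leq_evenfib leqNgt.
by apply/negP => jK; apply: dj; apply: dz.
Qed.

Lemma maxCG_evenfibE n T : maxCG_is n (evenfib T) = (evenfib T <= n < evenfib T.+1).
Proof.
have [d R] := cg_rep_exists n; have memCG := mem_CG R.
apply/idP/idP => [/andP[/memCG[j dT /evenfib_inj jT] /allP maxT] | /andP[Tn nT]].
  subst j; have dz j : T < j -> d j = 0.
    move=> Tj; apply/eqP/negPn/negP => /eqP dj.
    have /maxT : evenfib j \in CG n by apply/memCG; exists j.
    by rewrite leq_evenfib leqNgt Tj.
  rewrite (cg_rep_digit_le R dT) -(cg_rep_digval R dz).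
  exact: digval_lt_evenfib (cg_rep_digits R).
have dz := cg_rep_zero R nT.
have dT : d T <> 0.
  move=> dT; have dzT j : T <= j -> d j = 0.
    by rewrite leq_eqVlt => /predU1P[<- // | /dz].
  have := digval_lt_evenfib T (cg_rep_digits R).
  by rewrite (cg_rep_digval R dzT) ltnNge Tn.
apply/andP; split; first by apply/memCG; exists T.
apply/allP => x /memCG[j dj ->]; rewrite leq_evenfib leqNgt.
by apply/negP => Tj; apply: dj; apply: dz.
Qed.

Lemma inA_small K n : n < evenfib K -> inA K.+1 n = false.
Proof.
move=> nK; have [d R] := cg_rep_exists n.
by apply/negP => /(inA_cg_rep K R)[_ dK _]; apply: dK; apply: (cg_rep_zero R nK).
Qed.

Lemma inA_shift K m c i : K < m -> 0 < c <= 2 -> i < evenfib m ->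
  (c = 2 -> i < oddfib m) -> inA K.+1 (c * evenfib m + i) = inA K.+1 i.
Proof.
move=> Km c12 im c2; have [d R] := cg_rep_exists i.
have R' := cg_rep_set R im c12 c2.
have low j : j <= K -> set_digit d m c j = d j.
  by move=> jK; rewrite /set_digit ltn_eqF // (leq_ltn_trans jK Km).
apply/idP/idP => [/(inA_cg_rep K R')[_ dK dz] | /(inA_cg_rep K R)[i_gt0 dK dz]].
  apply/(inA_cg_rep K R); split; last 2 first.
  - by rewrite -low.
  - by move=> j jK; rewrite -low ?dz // ltnW.
  rewrite lt0n; apply/eqP => i0; move: R; rewrite i0 => /cg_rep0 d0.
  by apply: dK; rewrite low.
apply/(inA_cg_rep K R'); split; first by rewrite addn_gt0 i_gt0 orbT.
  by rewrite low.
by move=> j jK; rewrite low ?dz // ltnW.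
Qed.

Lemma inA_shift_top K c i : 0 < c <= 2 -> i < evenfib K ->
  (c = 2 -> i < oddfib K) -> inA K.+1 (c * evenfib K + i) = (i == 0).
Proof.
move=> c12 iK c2; have [d R] := cg_rep_exists i.
have R' := cg_rep_set R iK c12 c2; have dz := cg_rep_zero R iK.
have low j : j < K -> set_digit d K c j = d j by move=> jK; rewrite /set_digit ltn_eqF.
apply/idP/eqP => [/(inA_cg_rep K R')[_ _ lowz] | i0].
  rewrite -(cg_rep_digval R dz) /digval big1 // => j _.
  by rewrite -low // lowz.
have [c_gt0 _] := andP c12; apply/(inA_cg_rep K R'); split.
- by rewrite addn_gt0 muln_gt0 c_gt0 evenfib_gt0.
- by rewrite /set_digit eqxx; apply/eqP; rewrite -lt0n.
- by move: R; rewrite i0 => /cg_rep0 d0 j jK; rewrite low.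
Qed.

Lemma sum_nat_cat (F : nat -> nat) a b :
  \sum_(0 <= m < a + b) F m = \sum_(0 <= m < a) F m + \sum_(0 <= j < b) F (a + j).
Proof.
elim: b => [|b IH]; first by rewrite addn0 [in X in _ + X]big_geq ?addn0.
by rewrite addnS !big_nat_recr //= IH addnA.
Qed.

Lemma leq_sum_prefix (F : nat -> nat) a b : a <= b ->
  \sum_(0 <= m < a) F m <= \sum_(0 <= m < b) F m.
Proof. by move=> /subnKC <-; rewrite sum_nat_cat leq_addr. Qed.

Lemma sum_prefix_position (f : nat -> bool) a b n : f n ->
  (a <= n < b) =
  (\sum_(0 <= m < a) f m < \sum_(0 <= m < n.+1) f m <= \sum_(0 <= m < b) f m).
Proof.
move=> fn; have Sn : \sum_(0 <= m < n.+1) f m = (\sum_(0 <= m < n) f m).+1.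
  by rewrite big_nat_recr //= fn addn1.
apply/andP/andP => [[an nb] | [lo hi]]; split.
- by rewrite Sn ltnS leq_sum_prefix.
- exact: leq_sum_prefix.
- by rewrite leqNgt; apply/negP => /(leq_sum_prefix f); rewrite leqNgt lo.
- by rewrite ltnNge; apply/negP => /(leq_sum_prefix f); rewrite leqNgt -Sn hi.
Qed.

Lemma sum_eq0_indicator b : 0 < b -> \sum_(0 <= j < b) (j == 0 : nat) = 1.
Proof.
move=> b_gt0; rewrite big_ltn // big_nat_cond big1 // => j /andP[/andP[j_gt0 _] _].
by rewrite gtn_eqF.
Qed.

(* Counts A_{2K+2} below N: digit K has weight evenfib K = F_{2K+2}. *)
Definition countA K N := \sum_(0 <= m < N) inA K.+1 m.

Lemma posA_countA K n : posA K.+1 n = countA K n.+1.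
Proof. by rewrite /countA big_ltn. Qed.

Lemma countA_evenfib K : countA K (evenfib K) = 0.
Proof.
rewrite /countA big_nat_cond big1 // => m /andP[/andP[_ mK] _].
by rewrite inA_small.
Qed.

Lemma countA_evenfibS K m :
  countA K (evenfib m.+1) =
  countA K (evenfib m) + \sum_(0 <= j < evenfib m) inA K.+1 (1 * evenfib m + j)
                       + \sum_(0 <= j < oddfib m) inA K.+1 (2 * evenfib m + j).
Proof. by rewrite /countA evenfibS !sum_nat_cat mul1n mul2n -addnn. Qed.

Lemma countA_oddfibS K m :
  countA K (oddfib m.+1) =
  countA K (evenfib m) + \sum_(0 <= j < oddfib m) inA K.+1 (1 * evenfib m + j).
Proof. by rewrite /countA oddfibS sum_nat_cat mul1n. Qed.

Lemma countA_evenfib_rec K m : K < m ->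
  countA K (evenfib m.+1) =
  countA K (evenfib m) + countA K (evenfib m) + countA K (oddfib m).
Proof.
move=> Km; have oe := oddfib_le_evenfib m.
rewrite countA_evenfibS; congr (_ + _ + _); apply: eq_big_nat => j /andP[_ jm].
  by rewrite inA_shift.
by rewrite inA_shift // (leq_trans jm oe).
Qed.

Lemma countA_oddfib_rec K m : K < m ->
  countA K (oddfib m.+1) = countA K (evenfib m) + countA K (oddfib m).
Proof.
move=> Km; rewrite countA_oddfibS; congr (_ + _); apply: eq_big_nat => j /andP[_ jm].
by rewrite inA_shift // (leq_trans jm (oddfib_le_evenfib m)).
Qed.

Lemma countA_evenfib_base K : countA K (evenfib K.+1) = 2.
Proof.
rewrite countA_evenfibS countA_evenfib -[RHS]/(0 + 1 + 1); congr (_ + _ + _).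
  rewrite -[RHS](sum_eq0_indicator (evenfib_gt0 K)).
  by apply: eq_big_nat => j /andP[_ jK]; rewrite inA_shift_top.
rewrite -[RHS](sum_eq0_indicator (oddfib_gt0 K)).
apply: eq_big_nat => j /andP[_ jK].
by rewrite inA_shift_top // (leq_trans jK (oddfib_le_evenfib K)).
Qed.

Lemma countA_oddfib_base K : countA K (oddfib K.+1) = 1.
Proof.
rewrite countA_oddfibS countA_evenfib -[RHS](sum_eq0_indicator (oddfib_gt0 K)).
apply: eq_big_nat => j /andP[_ jK].
by rewrite inA_shift_top // (leq_trans jK (oddfib_le_evenfib K)).
Qed.

Lemma countA_fib K j :
  countA K (evenfib (K + j.+1)) = oddfib j.+1 /\
  countA K (oddfib (K + j.+1)) = evenfib j.
Proof.
elim: j => [|j [IHe IHo]].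
  by rewrite addn1 countA_evenfib_base countA_oddfib_base.
have Kj : K < K + j.+1 by rewrite -addSnnS leq_addr.
rewrite addnS countA_evenfib_rec ?countA_oddfib_rec // IHe IHo.
by rewrite !oddfibS !evenfibS; split; lia.
Qed.

Theorem lemma3p3 (k l n : nat) : 1 <= k -> 1 <= l ->
  (inA k n /\ maxCG_is n (fib (2 * k + 2 * l))) <->
  (inA k n /\ fib (2 * l + 1) + 1 <= posA k n <= fib (2 * l + 3)).
Proof.
case: k => // K _; case: l => // L _; set T := K + L.+1.
have -> : fib (2 * K.+1 + 2 * L.+1) = evenfib T by rewrite /evenfib; congr fib; lia.
have -> : fib (2 * L.+1 + 1) = countA K (evenfib T) by rewrite (countA_fib K L).1 addn1.
have -> : fib (2 * L.+1 + 3) = countA K (evenfib T.+1).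
  by rewrite -addnS (countA_fib K L.+1).1 /oddfib; congr fib; lia.
rewrite maxCG_evenfibE posA_countA addn1.
by split=> -[nA]; rewrite /countA (sum_prefix_position _ _ nA).
Qed.
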